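(* Let $D$ be a dataset, $\Omega=\{\omega_1,\dots,\omega_k\}$ a finite set of outcomes, $q$ a real-valued quality function with sensitivity $\Delta>0$, and $\varepsilon>0$; let $q_*=\max_i q(D,\omega_i)$. Then the output distributions of the Permute-and-Flip mechanism and of Intermediate Algorithm A (both defined below) on these inputs are the same.
   Context: $\mathrm{Expo}(\lambda)$ denotes the exponential distribution with rate $\lambda$, density $\lambda e^{-\lambda x}\mathbf{1}[x\ge0]$. $\mathrm{Bernoulli}(p)$ equals $1$ with probability $p$. Permute-and-Flip: compute $q_*$; draw a uniformly random permutation $\pi$ of $\{1,\dots,k\}$; for $j=1,\dots,k$ in order, let $r=\pi(j)$, $p=\exp\left(\frac{\varepsilon}{2\Delta}(q(D,\omega_r)-q_* )\right)$, and flip an independent $\mathrm{Bernoulli}(p)$ coin; if it equals $1$, return $r$ and stop. Intermediate Algorithm A: compute $q_*$; for each $i=1,\dots,k$ independently set $v_i=q(D,\omega_i)+X_i$ with $X_i\sim\mathrm{Expo}(\varepsilon/(2\Delta))$; let $S=\{i: v_i\ge q_*\}$ (nonempty, since it contains any index attaining $q_*$); return an element of $S$ chosen uniformly at random. *)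

From HB Require Import structures.
From mathcomp Require Import all_boot all_order all_algebra all_fingroup.
From mathcomp Require Import all_classical all_reals all_analysis.
Set Implicit Arguments. Unset Strict Implicit. Unset Printing Implicit Defensive.
Import Order.TTheory GRing.Theory Num.Theory.
Local Open Scope classical_set_scope.
Local Open Scope ring_scope.

(* Outcomes are indexed by 'I_k.+1 (a nonempty finite outcome set of size k.+1). *)

Definition qstar {R : realType} {k : nat} (q : 'I_k.+1 -> R) : R :=
  \big[Num.max/q ord0]_(i < k.+1) q i.

Definition pf_coin {R : realType} {k : nat} (eps Delta : R) (q : 'I_k.+1 -> R)
    (i : 'I_k.+1) : R :=
  expR (eps / (2 * Delta) * (q i - qstar q)).

(* Probability that Permute-and-Flip returns r: a uniformly random permutation
   pi, then at position j the coin of pi j is the first to come up 1. *)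
Definition permute_and_flip_prob {R : realType} {k : nat} (eps Delta : R)
    (q : 'I_k.+1 -> R) (r : 'I_k.+1) : R :=
  (#|{perm 'I_k.+1}|%:R)^-1 *
  \sum_(pi : {perm 'I_k.+1})
     \sum_(j : 'I_k.+1 | pi j == r)
        ((\prod_(l : 'I_k.+1 | (l < j)%N) (1 - pf_coin eps Delta q (pi l)))
           * pf_coin eps Delta q r).

Definition mutually_independent {d} {T : measurableType d} {R : realType}
    (P : probability T R) {n : nat} (X : 'I_n -> T -> R) : Prop :=
  forall B : 'I_n -> set R, (forall i, measurable (B i)) ->
    P (\bigcap_(i in [set: 'I_n]) (X i @^-1` B i)) =
    (\prod_(i < n) P (X i @^-1` B i))%E.

Definition algA_set {d} {T : measurableType d} {R : realType} {k : nat}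
    (q : 'I_k.+1 -> R) (X : 'I_k.+1 -> T -> R) (w : T) : {set 'I_k.+1} :=
  [set i | qstar q <= q i + X i w].

(* Probability that Algorithm A returns r: S is computed, then an element of S
   is chosen uniformly, i.e. r is returned with conditional probability
   1[r \in S]/|S|. *)
Definition algA_prob {d} {T : measurableType d} {R : realType}
    (P : probability T R) {k : nat} (q : 'I_k.+1 -> R)
    (X : 'I_k.+1 -> T -> R) (r : 'I_k.+1) : \bar R :=
  (\int[P]_w ((r \in algA_set q X w)%:R / #|algA_set q X w|%:R)%:E)%E.

From HB Require Import structures.
From mathcomp Require Import all_boot all_order all_algebra all_fingroup.
From mathcomp Require Import all_classical all_reals all_analysis.
Import Order.TTheory GRing.Theory Num.Theory.
Import numFieldNormedType.Exports.
Local Open Scope classical_set_scope.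
Local Open Scope ring_scope.

(* Both mechanisms return r with probability
   sum_S [r \in S] / |S| * prod_(i in S) p_i * prod_(i \notin S) (1 - p_i),
   where p_i = exp(eps (q_i - q_star) / (2 Delta)).  For Permute-and-Flip,
   flip every coin in advance: the set S of coins showing 1 has this product
   law, and the mechanism returns the first element of S in the random order,
   which is uniform on S because transpositions permute the candidates.  For
   Algorithm A, the exponential tail gives P(X_i >= q_star - q_i) = p_i, and
   independence gives the same product law for S. *)

Section CoinSets.
Context {R : comNzRingType} {n : nat} (p : 'I_n -> R).

Definition coins_prob (S : {set 'I_n}) : R :=
  \prod_i (if i \in S then p i else 1 - p i).

Lemma tails_head_coins_prob (A : {set 'I_n}) r : r \notin A ->
  \prod_(i in A) (1 - p i) * p r =
  \sum_(S : {set 'I_n}) ((r \in S) && [disjoint S & A])%:R * coins_prob S.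
Proof.
move=> rA.
(* Outside A and r each factor is p i + (1 - p i) = 1; on A only the tails
   term survives, at r only the heads term. *)
transitivity (\prod_i ((if i \in A then 0 else p i) +
                       (if i == r then 0 else 1 - p i))).
  rewrite [RHS](bigID (mem A)) /=; congr (_ * _).
    apply: eq_bigr => i iA; rewrite iA add0r ifF //.
    by apply: contraNF rA => /eqP <-.
  rewrite (bigD1 r) //= (negbTE rA) eqxx addr0 big1 ?mulr1 // => i /andP[iA ir].
  by rewrite (negbTE iA) (negbTE ir) addrC subrK.
rewrite bigA_distr; apply: eq_bigr => S _.
have [rS|rS] /= := boolP (r \in S); last first.
  by rewrite mul0r (bigD1 r) //= (negbTE rS) eqxx mul0r.
have [dSA|] := boolP [disjoint S & A]; last first.
  rewrite -setI_eq0 => /set0Pn [i]; rewrite inE => /andP[iS iA].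
  by rewrite mul0r (bigD1 i) //= iS iA mul0r.
rewrite mul1r; apply: eq_bigr => i _; case: ifP => iS.
  by rewrite (disjointFr dSA iS).
by rewrite ifF //; apply: contraFF iS => /eqP ->.
Qed.

End CoinSets.

Section FirstInPermutation.
Context {n : nat}.
Implicit Types (pi : {perm 'I_n}) (S : {set 'I_n}).

Definition perm_first pi S (r : 'I_n) : bool :=
  (r \in S) && [forall s in S, (pi^-1)%g r <= (pi^-1)%g s]%N.

Lemma perm_first_tperm S s t pi : s \in S -> t \in S ->
  perm_first (pi * tperm s t)%g S t = perm_first pi S s.
Proof.
move=> sS tS.
have tpermS u : (tperm s t u \in S) = (u \in S).
  by case: tpermP => [->|->|]; rewrite ?sS ?tS.
rewrite /perm_first sS tS invMg tpermV.
by apply/forall_inP/forall_inP => H u uS; have := H (tperm s t u);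
  rewrite tpermS => /(_ uS); rewrite !permM ?tpermK tpermR.
Qed.

Lemma perm_first_unique pi S : (0 < #|S|)%N ->
  (\sum_(s in S) perm_first pi S s = 1)%N.
Proof.
rewrite card_gt0 => /set0Pn [r rS].
have [m mS mmin] := arg_minnP (fun s => nat_of_ord ((pi^-1)%g s)) rS.
have firstm : perm_first pi S m by apply/andP; split=> //; apply/forall_inP.
rewrite (bigD1 m) //= firstm big1 // => s /andP[sS sm].
apply/eqP; rewrite eqb0; apply: contraNN sm => /andP[_ /forall_inP /(_ m mS) sm].
apply/eqP/(@perm_inj _ (pi^-1)%g)/val_inj/eqP.
by rewrite eqn_leq sm mmin.
Qed.

Lemma card_mul_count_perm_first S r : r \in S ->
  (#|S| * \sum_pi perm_first pi S r = #|{perm 'I_n}|)%N.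
Proof.
move=> rS.
have count_eq s : s \in S ->
    (\sum_pi perm_first pi S s = \sum_pi perm_first pi S r)%N.
  move=> sS; rewrite (reindex_inj (mulIg (tperm r s))) /=.
  by apply: eq_bigr => pi _; rewrite perm_first_tperm.
rewrite -sum_nat_const; under eq_bigr => s sS do rewrite -(count_eq s sS).
rewrite exchange_big /= -sum1_card; apply: eq_bigr => pi _.
by apply: perm_first_unique; rewrite card_gt0; apply/set0Pn; exists r.
Qed.

End FirstInPermutation.

Section PermuteAndFlipCoins.
Context {R : numFieldType} {n : nat} (p : 'I_n -> R).

Lemma perm_first_head_coins_prob (pi : {perm 'I_n}) r :
  \sum_(j : 'I_n | pi j == r) (\prod_(l : 'I_n | (l < j)%N) (1 - p (pi l))) * p r
  = \sum_(S : {set 'I_n}) (perm_first pi S r)%:R * coins_prob p S.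
Proof.
rewrite (big_pred1 ((pi^-1)%g r)); last first.
  by move=> j; apply/eqP/eqP => [<-|->]; rewrite ?permK ?permKV.
rewrite (reindex_inj (@perm_inj _ (pi^-1)%g)) /=.
under eq_bigr do rewrite permKV.
rewrite (eq_bigl (fun i => i \in [set i | ((pi^-1)%g i < (pi^-1)%g r)%N]%SET));
  last by move=> i; rewrite inE.
rewrite tails_head_coins_prob ?inE ?ltnn //.
apply: eq_bigr => S _; congr ((_ && _)%:R * _).
rewrite disjoint_subset; apply/fintype.subsetP/forall_inP => H s sS.
  by have := H s sS; rewrite !inE -leqNgt.
by rewrite !inE -leqNgt H.
Qed.

Lemma mean_perm_first (S : {set 'I_n}) r :
  (#|{perm 'I_n}|%:R)^-1 * \sum_(pi : {perm 'I_n}) (perm_first pi S r)%:R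
  = (r \in S)%:R / #|S|%:R :> R.
Proof.
have [rS|rS] := boolP (r \in S); last first.
  by rewrite big1 ?mulr0 ?mul0r // => pi _; rewrite /perm_first (negbTE rS).
have count_perm := card_mul_count_perm_first _ _ rS.
have count0 : (\sum_(pi : {perm 'I_n}) perm_first pi S r)%:R != 0 :> R.
  by rewrite pnatr_eq0 -lt0n; move: (fact_gt0 n);
    rewrite -card_Sn -count_perm muln_gt0 => /andP[].
by rewrite -natr_sum -count_perm natrM invfM divfK // mul1r.
Qed.

Lemma permute_and_flip_coins r :
  (#|{perm 'I_n}|%:R)^-1 *
  \sum_(pi : {perm 'I_n})
     \sum_(j : 'I_n | pi j == r)
        ((\prod_(l : 'I_n | (l < j)%N) (1 - p (pi l))) * p r)
  = \sum_(S : {set 'I_n}) ((r \in S)%:R / #|S|%:R) * coins_prob p S.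
Proof.
under eq_bigr do rewrite perm_first_head_coins_prob.
rewrite exchange_big /= mulr_sumr; apply: eq_bigr => S _.
by rewrite -mulr_suml mulrA mean_perm_first.
Qed.

End PermuteAndFlipCoins.

Lemma exponential_prob_itvcy {R : realType} (rate c : R) : 0 < rate -> 0 <= c ->
  exponential_prob rate `[c, +oo[ = (expR (- rate * c))%:E.
Proof.
move=> rate0 c0.
have continuous_expNM : continuous (fun z : R^o => expR (- rate * z)).
  move=> z; apply: continuous_comp; last exact: continuous_expR.
  by apply: continuousM => //; apply: (@continuousN _ R^o); exact: cst_continuous.
rewrite /exponential_prob (@ge0_continuous_FTC2y _ _ (fun x => - expR (- rate * x)) _ 0) //.
- by rewrite EFinN sub0e oppeK.
- by move=> x _; apply: exponential_pdf_ge0; exact: ltW.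
- apply: (@continuous_subspaceW R^o _ _ [set` `[0, +oo[%R]).
    by move=> x /=; rewrite !in_itv /= !andbT => /(le_trans c0).
  exact: within_continuous_exponential_pdf.
- rewrite -oppr0; apply: cvgN.
  rewrite (_ : (fun x => expR (- rate * x)) =
               (fun z => expR (- z)) \o (fun z => rate * z)); last first.
    by apply: eq_fun => x; rewrite mulNr.
  apply: (@cvg_comp _ _ _ _ _ _ (pinfty_nbhs R)); last exact: cvgr_expR.
  exact: gt0_cvgMry.
- by apply: cvgN; apply/cvg_at_right_filter; exact: continuous_expNM.
- move=> z; rewrite in_itv /= andbT => cz.
  by apply: derive1_exponential_pdf; rewrite in_itv /= andbT (le_lt_trans c0 cz).
Qed.

Lemma ge0_integral_fin_valued {d} {T : measurableType d} {R : realType}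
    (mu : {measure set T -> \bar R}) {F : finType} (Y : T -> F) (f : F -> R) :
  (forall y, measurable (Y @^-1` [set y])) -> (forall y, 0 <= f y) ->
  (\int[mu]_w (f (Y w))%:E = \sum_y (f y)%:E * mu (Y @^-1` [set y]))%E.
Proof.
move=> mY f0.
transitivity (\int[mu]_w \sum_y (f y * \1_(Y @^-1` [set y]) w)%:E)%E.
  apply: eq_integral => w _; rewrite (bigD1 (Y w)) //= indicE mem_set // mulr1.
  rewrite big1 ?adde0 // => y /negbTE yY.
  by rewrite indicE memNset ?mulr0 //= => /eqP; rewrite eq_sym yY.
rewrite ge0_integral_sum //; last 2 first.
- move=> y; apply/measurable_realfun.measurable_EFinP.
  exact/measurable_realfun.measurable_funM/measurable_realfun.measurable_indic.
- by move=> y w _; rewrite lee_fin mulr_ge0.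
apply: eq_bigr => y _; under eq_integral do rewrite EFinM.
rewrite ge0_integralZl_EFin ?integral_indic ?setIT //.
apply/measurable_realfun.measurable_EFinP.
exact: measurable_realfun.measurable_indic.
Qed.

Definition exceed_set {T : Type} {R : realType} {n : nat}
    (c : 'I_n -> R) (X : 'I_n -> T -> R) (w : T) : {set 'I_n} :=
  [set i | c i <= X i w].

Section ExponentialThresholds.
Context {d : measure_display} {T : measurableType d} {R : realType}.
Context (P : probability T R) {n : nat}.
Variables (rate : R) (X : 'I_n -> T -> R) (c : 'I_n -> R).
Hypothesis rate_gt0 : 0 < rate.
Hypothesis mX : forall i, measurable_fun setT (X i).
Hypothesis X_exponential : forall i (A : set R), measurable A ->
  P (X i @^-1` A) = exponential_prob rate A.
Hypothesis X_indep : mutually_independent P X.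
Hypothesis c_ge0 : forall i, 0 <= c i.

Let side (S : {set 'I_n}) i : set R :=
  if i \in S then [set` `[c i, +oo[] else [set` `]-oo, c i[].

Lemma exceed_set_preimage S :
  exceed_set c X @^-1` [set S] = \bigcap_(i in [set: 'I_n]) X i @^-1` side S i.
Proof.
apply/seteqP; split => w /=.
  by move=> <- i _; rewrite /side inE; case: leP => /=; rewrite in_itv /= ?andbT.
move=> Xw; apply/setP => i; rewrite inE.
move: (Xw i I); rewrite /side; case: (i \in S); rewrite /= in_itv /= ?andbT //.
by rewrite ltNge => /negbTE.
Qed.

Let measurable_preimage i (A : set R) : measurable A -> measurable (X i @^-1` A).
Proof. by move=> mA; rewrite -[X i @^-1` A]setTI; exact: mX. Qed.

Lemma measurable_exceed_set_preimage S : measurable (exceed_set c X @^-1` [set S]).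
Proof.
rewrite exceed_set_preimage; apply: fin_bigcap_measurable; first exact: finite_finset.
by move=> i _; apply: measurable_preimage; rewrite /side; case: ifP.
Qed.

Lemma prob_exceed_set S :
  P (exceed_set c X @^-1` [set S]) = (coins_prob (fun i => expR (- rate * c i)) S)%:E.
Proof.
have tail i : P (X i @^-1` `[c i, +oo[) = (expR (- rate * c i))%:E.
  by rewrite X_exponential // exponential_prob_itvcy.
rewrite exceed_set_preimage X_indep; last by move=> i; rewrite /side; case: ifP.
rewrite /coins_prob -prodEFin; apply: eq_bigr => i _; rewrite /side.
case: ifP => _ //.
rewrite -(setCitvr (BLeft (c i))) -(preimage_setC (X i)) probability_setC; last by apply: measurable_preimage.
by rewrite tail EFinB.
Qed.

End ExponentialThresholds.

Lemma le_qstar {R : realType} {k : nat} (q : 'I_k.+1 -> R) i : q i <= qstar q.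
Proof. by rewrite /qstar (bigD1 i) //= le_max lexx. Qed.

Theorem lemma1 (R : realType) (Dset : Type) (neighbor : Dset -> Dset -> Prop)
  (k : nat) (q : Dset -> 'I_k.+1 -> R) (D : Dset) (Delta eps : R)
  (hDelta : 0 < Delta) (heps : 0 < eps)
  (hsens : forall D1 D2 i, neighbor D1 D2 -> `|q D1 i - q D2 i| <= Delta)
  (d : measure_display) (T : measurableType d) (P : probability T R)
  (X : 'I_k.+1 -> T -> R)
  (hXmeas : forall i, measurable_fun setT (X i))
  (hXlaw : forall i (A : set R), measurable A ->
     P (X i @^-1` A) = exponential_prob (eps / (2 * Delta)) A)
  (hXind : mutually_independent P X) :
  forall r : 'I_k.+1,
    ((permute_and_flip_prob eps Delta (q D) r)%:E = algA_prob P (q D) X r)%E.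
Proof.
(* The sensitivity bound [hsens] matters for privacy only, not for this identity. *)
move=> r.
set rate := eps / (2 * Delta).
have rate_gt0 : 0 < rate by rewrite divr_gt0 // mulr_gt0.
set c := fun i => qstar (q D) - q D i.
have c_ge0 i : 0 <= c i by rewrite subr_ge0 le_qstar.
rewrite /permute_and_flip_prob permute_and_flip_coins.
have -> : pf_coin eps Delta (q D) = fun i => expR (- rate * c i).
  by apply/funext => i; rewrite /pf_coin mulNr -mulrN opprB.
have algA_exceed w : algA_set (q D) X w = exceed_set c X w.
  by apply/setP => i; rewrite !inE lerBlDl.
rewrite /algA_prob.
under eq_integral do rewrite algA_exceed.
rewrite (ge0_integral_fin_valued P (exceed_set c X)
  (fun S : {set 'I_k.+1} => (r \in S)%:R / #|S|%:R)); last 2 first.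
- exact: measurable_exceed_set_preimage.
- by move=> S; rewrite divr_ge0.
rewrite -sumEFin; apply: eq_bigr => S _.
by rewrite EFinM; congr (_ * _)%E; apply/esym/prob_exceed_set.
Qed.
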